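(* Let $G=(V,E)$ be a finite simple graph on $n$ vertices and $C\subseteq V$ such that no vertex of $V\setminus C$ is isolated in $G$. Let $t,k$ be positive integers with $t\le k$, and let $S=(v_1,\dots,v_t)$ and $S'=(v_1,\dots,v_t,v_{t+1},\dots,v_k)$ be legal sequences of $G;C$. Then $$k\le n-\Big|\bigcup_{i=1}^t N\langle v_i\rangle\Big| + t.$$
   Context: $N\langle v\rangle = N[v]$ (closed neighborhood) if $v\in C$ and $N\langle v\rangle=N(v)$ (open neighborhood) if $v\notin C$. A sequence $(v_1,\dots,v_k)$ of distinct vertices is a legal sequence of $G;C$ if $N\langle v_i\rangle\setminus\bigcup_{j=1}^{i-1}N\langle v_j\rangle\neq\emptyset$ for all $i=2,\dots,k$. *)

From mathcomp Require Import all_boot.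
Set Implicit Arguments. Unset Strict Implicit. Unset Printing Implicit Defensive.

Definition simple_graph (T : finType) (e : rel T) : Prop :=
  symmetric e /\ irreflexive e.

Definition onbhd (T : finType) (e : rel T) (v : T) : {set T} := [set u | e v u].
Definition cnbhd (T : finType) (e : rel T) (v : T) : {set T} := v |: onbhd e v.

Definition Nang (T : finType) (e : rel T) (C : {set T}) (v : T) : {set T} :=
  if v \in C then cnbhd e v else onbhd e v.

Definition Nang_seq (T : finType) (e : rel T) (C : {set T}) (s : seq T) : {set T} :=
  \bigcup_(v <- s) Nang e C v.

Definition legal_seq (T : finType) (e : rel T) (C : {set T}) (s : seq T) : Prop :=
  uniq s /\
  forall (i : nat) (x0 : T), 0 < i < size s ->
    Nang e C (nth x0 s i) :\: Nang_seq e C (take i s) != set0.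

(* Every vertex after the first in a legal sequence contributes a new vertex
   to the union of the neighbourhoods chosen so far.  Along the k - t vertices
   that extend S to S', the union therefore grows from |U_{i<=t} N<v_i>| by at
   least k - t, while it never exceeds n. *)

From mathcomp Require Import all_boot.
From mathcomp Require Import zify.

Set Implicit Arguments.
Unset Strict Implicit.
Unset Printing Implicit Defensive.

Section LegalSeq.

Variables (T : finType) (e : rel T) (C : {set T}).

Lemma Nang_seq_rcons (s : seq T) (v : T) :
  Nang_seq e C (rcons s v) = Nang_seq e C s :|: Nang e C v.
Proof. by rewrite /Nang_seq big_rcons. Qed.

Lemma card_Nang_seq_take_ltS (s : seq T) (i : nat) :
  legal_seq e C s -> 0 < i < size s ->
  #|Nang_seq e C (take i s)| < #|Nang_seq e C (take i.+1 s)|.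
Proof.
move=> [_ new_nbhd] /andP[i_gt0 i_lt].
have x0 : T by clear new_nbhd; case: s i_lt => // x.
rewrite (take_nth x0 i_lt) Nang_seq_rcons; apply/proper_card/properUl.
by rewrite -setD_eq0 new_nbhd // i_gt0.
Qed.

Lemma card_Nang_seq_take_addn (s : seq T) (i d : nat) :
  legal_seq e C s -> 0 < i -> i + d <= size s ->
  #|Nang_seq e C (take i s)| + d <= #|Nang_seq e C (take (i + d) s)|.
Proof.
move=> legal_s i_gt0; elim: d => [|d IHd] id_le; first by rewrite !addn0.
rewrite !addnS in id_le *.
apply: leq_ltn_trans (IHd (ltnW id_le)) _.
by apply: card_Nang_seq_take_ltS; rewrite // id_le (leq_trans i_gt0) ?leq_addr.
Qed.

End LegalSeq.

Theorem proposition2 (T : finType) (e : rel T) (C : {set T}) (s s' : seq T) :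
  simple_graph e ->
  (forall v : T, v \notin C -> exists u : T, e v u) ->
  0 < size s -> size s <= size s' ->
  s = take (size s) s' ->
  legal_seq e C s -> legal_seq e C s' ->
  size s' <= #|T| - #|Nang_seq e C s| + size s.
Proof.
move=> _ _ s_gt0 s_le s_prefix _ legal_s'.
have := card_Nang_seq_take_addn legal_s' s_gt0 (eq_leq (subnKC s_le)).
rewrite subnKC // take_size -s_prefix => grow.
have := leq_trans grow (max_card _).
lia.
Qed.
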